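(* For each finite $C$-group $(G,Y)$ there is a constant $T\in\mathbb N$ such that if $s_1,s_2\in S(G,Y)^G$ satisfy $\tau_i(s_1)\ge T$ for $i=1,\dots,m$ and $\alpha_G(s_1)=\alpha_G(s_2)$, then $s_1=s_2$.
   Context: A $C$-group is a pair $(G,Y)$, $G$ a group, $Y\subset G$ a union of finitely many conjugacy classes with $1\notin Y$, such that $G$ has a presentation with generators the elements of $Y$ and defining relations all of the form $z^{-1}yz=y'$ ($y,y',z\in Y$); it is finite if $Y$ is finite. Write $Y=C_1\sqcup\dots\sqcup C_m$ as its decomposition into conjugacy classes of $G$. The factorization semigroup $S(G,Y)$ is generated by symbols $x_y$, $y\in Y$, subject to $x_{g_1}x_{g_2}=x_{g_2}x_{g_2^{-1}g_1g_2}=x_{g_1g_2g_1^{-1}}x_{g_1}$ ($g_1,g_2\in Y$); $\alpha_G:S(G,Y)\to G$, $x_y\mapsto y$. For $s=x_{g_1}\cdots x_{g_n}$, $G_s$ is the subgroup generated by $g_1,\dots,g_n$ (independent of the expression), and $S(G,Y)^G=\{s:G_s=G\}$. $\tau_i(s)$ denotes the number of factors $x_y$ of $s$ with $y\in C_i$. *)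

From HB Require Import structures.
From mathcomp Require Import all_boot.
From mathcomp Require Import boolp.

Set Implicit Arguments.
Unset Strict Implicit.
Unset Printing Implicit Defensive.

Local Open Scope group_scope.

Section CGroups.
Variable G : groupType.

(* the subgroup generated by the elements of a list [s] is all of [G] *)
Definition generates (s : seq G) : Prop :=
  forall P : G -> Prop,
    P 1 -> (forall x y, P x -> P y -> P (x * y)) -> (forall x, P x -> P x^-1) ->
    (forall x, x \in s -> P x) -> forall g, P g.

(* (G, Y) is a C-group: Y is a finite union of conjugacy classes not containing 1,
   and G = < Y | z^-1 y z = y' (y,y',z in Y) >.  The presentation is expressed by
   its universal property: Y generates G and every map f : G -> H (H any group)
   respecting all conjugation relations z^-1 y z = y' among elements of Y extends
   to a group homomorphism G -> H agreeing with f on Y. *)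
Definition is_Cgroup (Y : seq G) : Prop :=
  [/\ 1 \notin Y,
      (forall y g, y \in Y -> y ^ g \in Y),
      generates Y &
      forall (H : groupType) (f : G -> H),
        (forall y z, y \in Y -> z \in Y -> f (y ^ z) = f y ^ f z) ->
        exists phi : G -> H,
          (forall a b, phi (a * b) = phi a * phi b) /\
          (forall y, y \in Y -> phi y = f y)].

(* Elements of S(G,Y) are represented by words (lists of letters y in Y, the
   word [:: g1; ...; gn] standing for x_{g1} ... x_{gn}); equality in S(G,Y) is
   the congruence generated by the defining relations
   x_{g1} x_{g2} = x_{g2} x_{g2^-1 g1 g2} = x_{g1 g2 g1^-1} x_{g1}. *)
Inductive fs_step : seq G -> seq G -> Prop :=
  | fs_step1 a b g1 g2 :
      fs_step (a ++ [:: g1; g2] ++ b) (a ++ [:: g2; g1 ^ g2] ++ b)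
  | fs_step2 a b g1 g2 :
      fs_step (a ++ [:: g1; g2] ++ b) (a ++ [:: g1 * g2 * g1^-1; g1] ++ b).

Inductive fs_eq : seq G -> seq G -> Prop :=
  | fs_refl s : fs_eq s s
  | fs_of_step s t : fs_step s t -> fs_eq s t
  | fs_sym s t : fs_eq s t -> fs_eq t s
  | fs_trans s t u : fs_eq s t -> fs_eq t u -> fs_eq s u.

Definition is_word (Y : seq G) (s : seq G) : Prop := all (fun x => x \in Y) s.

Definition alphaG (s : seq G) : G := foldr (fun x r => x * r) 1 s.

(* tau for the conjugacy class of y in G: number of letters of s conjugate to y *)
Definition tau (y : G) (s : seq G) : nat :=
  count (fun x => `[< exists g : G, x = y ^ g >]) s.

End CGroups.

(* Let n be the order of the symmetric group of Y: conjugation by y^n fixes Y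
   pointwise, so the "block" x_y^n commutes with every factorization.  If a word
   v generates G, then x_y^n v = x_(y^g)^n v for all g, so blocks in front of v
   only matter through their number in each conjugacy class.  Hence a generating
   word s with many letters of each class equals blocks followed by a normal part
   R of bounded length whose class counts only depend on those of s mod n.

   If alphaG s1 = alphaG s2 then s1 and s2 are stably equal, s1 x_Z = s2 x_Z'
   for products of blocks x_Z, x_Z': by the universal property of (G, Y), G acts
   on predicates on words invariant under stable equality, y acting by appending
   x_y.  Likewise the homomorphism G -> Z counting the letters of one class shows
   that s1 and s2 have the same class counts.  Finally, among the finitely many
   pairs of normal parts, those made equal by some product of blocks are made
   equal by one with at most K letters; once T is large, s1 already contains
   such blocks, and s1 = s2. *)

From HB Require Import structures.
From mathcomp Require Import all_boot fingroup perm cyclic.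
From mathcomp Require Import boolp zify.
From Stdlib Require BinInt Znat.

Set Implicit Arguments.
Unset Strict Implicit.
Unset Printing Implicit Defensive.

Local Open Scope group_scope.

Section Bijections.
Variable X : Type.

Record bij := Bij {
  bij_fun :> X -> X;
  bij_inv : X -> X;
  bij_funK : cancel bij_fun bij_inv;
  bij_invK : cancel bij_inv bij_fun }.

Lemma bij_fun_inj : injective bij_fun.
Proof.
case=> f g fK gK [f' g' fK' gK'] /= Ef; subst f'.
have Eg : g = g' by apply: funext => x; rewrite -{1}(gK' x) fK.
by subst g'; congr Bij; apply: Prop_irrelevance.
Qed.

HB.instance Definition _ := gen_eqMixin bij.
HB.instance Definition _ := gen_choiceMixin bij.

Definition bij1 := @Bij id id (frefl _) (frefl _).
Definition bijV (p : bij) := Bij (bij_invK p) (bij_funK p).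

Lemma bijM_funK (p q : bij) : cancel (p \o q) (bij_inv q \o bij_inv p).
Proof. by move=> x /=; rewrite !bij_funK. Qed.
Lemma bijM_invK (p q : bij) : cancel (bij_inv q \o bij_inv p) (p \o q).
Proof. by move=> x /=; rewrite !bij_invK. Qed.
Definition bijM (p q : bij) := Bij (bijM_funK p q) (bijM_invK p q).

Lemma bijMA : associative bijM. Proof. by move=> p q r; apply: bij_fun_inj. Qed.
Lemma bij1M : left_id bij1 bijM. Proof. by move=> p; apply: bij_fun_inj. Qed.
Lemma bijM1 : right_id bij1 bijM. Proof. by move=> p; apply: bij_fun_inj. Qed.
Lemma bijVM : left_inverse bij1 bijV bijM.
Proof. by move=> p; apply: bij_fun_inj; apply: funext => x /=; rewrite bij_funK. Qed.
Lemma bijMV : right_inverse bij1 bijV bijM.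
Proof. by move=> p; apply: bij_fun_inj; apply: funext => x /=; rewrite bij_invK. Qed.

HB.instance Definition _ := isGroup.Build bij bijMA bij1M bijM1 bijVM bijMV.

Lemma bijME (p q : bij) x : (p * q) x = p (q x). Proof. by []. Qed.

End Bijections.

Section WordCalculus.
Variable G : groupType.
Implicit Types (a b s t u : seq G) (g h x : G).

Lemma fs_eq_cat a b s t : fs_eq s t -> fs_eq (a ++ s ++ b) (a ++ t ++ b).
Proof.
elim=> {s t} [s | s t st | s t _ | s t u _ st _ tu].
- exact: fs_refl.
- apply: fs_of_step; case: st => a' b' g1 g2;
    rewrite !catA -!(catA (a ++ a')) -(catA _ b' b);
    [exact: fs_step1 | exact: fs_step2].
- exact: fs_sym.
- exact: fs_trans st tu.
Qed.

Lemma fs_eq_catl a s t : fs_eq s t -> fs_eq (a ++ s) (a ++ t).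
Proof. by move/(fs_eq_cat a [::]); rewrite !cats0. Qed.

Lemma fs_eq_catr b s t : fs_eq s t -> fs_eq (s ++ b) (t ++ b).
Proof. exact: fs_eq_cat [::] b s t. Qed.

Definition conjw h s := [seq x ^ h | x <- s].

Lemma conjwM h k s : conjw k (conjw h s) = conjw (h * k) s.
Proof. by rewrite /conjw -map_comp; apply: eq_map => x /=; rewrite conjgM. Qed.

Lemma conjw1 s : conjw 1 s = s.
Proof. by rewrite /conjw (eq_map (@conjg1 G)) map_id. Qed.

Lemma conjwK h s : conjw h^-1 (conjw h s) = s.
Proof. by rewrite conjwM mulgV conjw1. Qed.

Lemma conjw_id h s : {in s, forall x, commute h x} -> conjw h s = s.
Proof.
move=> hs; rewrite -[RHS]map_id; apply/eq_in_map => x /hs hx.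
by rewrite /= conjgE -hx mulKg.
Qed.

Lemma alphaG_cat s t : alphaG (s ++ t) = alphaG s * alphaG t.
Proof. by elim: s => [|x s IHs] /=; rewrite ?mul1g // IHs mulgA. Qed.

Lemma alphaG_nseq k x : alphaG (nseq k x) = x ^+ k.
Proof. by elim: k => [|k IHk] //=; rewrite IHk expgS. Qed.

Lemma fs_eq_shiftr1 g u : fs_eq (g :: u) (u ++ [:: g ^ alphaG u]).
Proof.
elim: u g => [|x u IHu] g /=; first by rewrite conjg1; apply: fs_refl.
apply: (fs_trans (t := x :: g ^ x :: u)).
  by apply: fs_of_step; apply: (fs_step1 [::]).
by rewrite conjgM; apply: (fs_eq_catl [:: x]).
Qed.

Lemma fs_eq_shiftr a u : fs_eq (a ++ u) (u ++ conjw (alphaG u) a).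
Proof.
elim: a => [|g a IHa] /=; first by rewrite cats0; apply: fs_refl.
apply: (fs_trans (t := g :: u ++ conjw (alphaG u) a)).
  exact: (fs_eq_catl [:: g]).
by have := fs_eq_catr (conjw (alphaG u) a) (fs_eq_shiftr1 g u); rewrite -catA.
Qed.

Lemma fs_eq_shiftl1 g u : fs_eq (g :: u) (conjw g^-1 u ++ [:: g]).
Proof.
elim: u => [|x u IHu] /=; first exact: fs_refl.
apply: (fs_trans (t := g * x * g^-1 :: g :: u)).
  by apply: fs_of_step; apply: (fs_step2 [::]).
by rewrite conjgE invgK mulgA; apply: (fs_eq_catl [:: _]).
Qed.

Lemma fs_eq_shiftl a u : fs_eq (a ++ u) (conjw (alphaG a)^-1 u ++ a).
Proof.
elim: a u => [|g a IHa] u /=; first by rewrite invg1 conjw1 cats0; apply: fs_refl.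
apply: (fs_trans (t := g :: conjw (alphaG a)^-1 u ++ a)).
  exact: (fs_eq_catl [:: g]).
by have := fs_eq_catr a (fs_eq_shiftl1 g (conjw (alphaG a)^-1 u));
  rewrite -catA conjwM -invgM.
Qed.

Lemma fs_eq_swap a u : {in u, forall x, commute (alphaG a) x} ->
  fs_eq (a ++ u) (u ++ a).
Proof.
move=> au; rewrite -{2}(conjw_id (h := (alphaG a)^-1) (s := u)); last first.
  by move=> x /au /commute_sym /commuteV /commute_sym.
exact: fs_eq_shiftl.
Qed.

Lemma fs_eq_pull g a b : fs_eq (a ++ g :: b) (g :: conjw g a ++ b).
Proof.
have := fs_eq_catr b (fs_eq_shiftl [:: g] (conjw g a)).
by rewrite /= mulg1 conjwK -catA => /fs_sym.
Qed.

Lemma count_mem_conjw g a : count_mem g (conjw g a) = count_mem g a.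
Proof.
rewrite count_map; apply: eq_count => x /=.
have gJg : g ^ g = g by rewrite conjgE mulKg.
by rewrite -{2}gJg (inj_eq (@conjg_inj _ g)).
Qed.

End WordCalculus.

Section ClassCounts.
Variable G : groupType.
Implicit Types (s t : seq G) (g h x y z : G).

Definition are_conj y x : bool := `[< exists g, x = y ^ g >].

Lemma are_conjP y x : reflect (exists g, x = y ^ g) (are_conj y x).
Proof. exact: asboolP. Qed.

Lemma are_conj_refl y : are_conj y y.
Proof. by apply/are_conjP; exists 1; rewrite conjg1. Qed.

Lemma are_conjJ y x h : are_conj y (x ^ h) = are_conj y x.
Proof.
apply/are_conjP/are_conjP => [[g E]|[g ->]]; last by exists (g * h); rewrite conjgM.
by exists (g * h^-1); rewrite conjgM -E conjgK.
Qed.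

Lemma are_conj_sym y x : are_conj y x = are_conj x y.
Proof. by apply/are_conjP/are_conjP => -[g ->]; exists g^-1; rewrite conjgK. Qed.

Lemma are_conj_trans x y z : are_conj y x -> are_conj x z -> are_conj y z.
Proof. by move=> /are_conjP[g ->] /are_conjP[h ->]; rewrite !are_conjJ are_conj_refl. Qed.

Lemma are_conj_eql y y' x : are_conj y y' -> are_conj y x = are_conj y' x.
Proof.
move=> yy'; apply/idP/idP; last exact: are_conj_trans.
by apply: are_conj_trans; rewrite are_conj_sym.
Qed.

Lemma are_conj_eqr y x x' : are_conj x x' -> are_conj y x = are_conj y x'.
Proof. by move=> xx'; rewrite are_conj_sym (are_conj_eql _ xx') are_conj_sym. Qed.

Lemma tau_cat y s t : tau y (s ++ t) = tau y s + tau y t.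
Proof. exact: count_cat. Qed.

Lemma tau_cons y x s : tau y (x :: s) = are_conj y x + tau y s.
Proof. by []. Qed.

Lemma tau_nseq y k x : tau y (nseq k x) = (k * are_conj y x)%N.
Proof. by rewrite /tau count_nseq mulnC. Qed.

Lemma tau_are_conj y y' s : are_conj y y' -> tau y s = tau y' s.
Proof. by move=> yy'; apply: eq_count => x; apply: are_conj_eql. Qed.

Lemma tau_perm y s t : perm_eq s t -> tau y s = tau y t.
Proof. by move/seq.permP; apply. Qed.

Lemma tau_fs_eq y s t : fs_eq s t -> tau y s = tau y t.
Proof.
elim=> {s t} [// | s t [a b g1 g2|a b g1 g2] | // | s t u _ -> _ -> //].
all: rewrite !tau_cat !tau_cons; congr (_ + (_ + _)).
- by rewrite are_conjJ addnCA.
- have -> : g1 * g2 / g1 = g2 ^ g1^-1 by rewrite conjgE invgK mulgA.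
  by rewrite are_conjJ addnCA.
Qed.

Lemma has_are_conj y s : 0 < tau y s -> exists2 x, x \in s & are_conj y x.
Proof. by rewrite -has_count => /hasP[x]; exists x. Qed.

End ClassCounts.

Section Generation.
Variable G : groupType.
Implicit Types (a b s t : seq G) (g x : G).

Section SubgroupPredicate.
Variable P : G -> Prop.
Hypothesis PM : forall x y, P x -> P y -> P (x * y).
Hypothesis PV : forall x, P x -> P x^-1.

Lemma in_cat3 a m b :
  {in a ++ m ++ b, forall x, P x} <->
  [/\ {in a, forall x, P x}, {in m, forall x, P x} & {in b, forall x, P x}].
Proof.
split=> [Pamb | [Pa Pm Pb] x]; last by rewrite !mem_cat => /or3P[/Pa|/Pm|/Pb].
by split=> x x_in; apply: Pamb; rewrite !mem_cat x_in ?orbT.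
Qed.

Lemma in_pair g1 g2 : {in [:: g1; g2], forall x, P x} <-> P g1 /\ P g2.
Proof.
split=> [P12 | [Pg1 Pg2] x]; last by rewrite !inE => /orP[]/eqP->.
by split; apply: P12; rewrite !inE eqxx ?orbT.
Qed.

Lemma P_conj x g : P x -> P g -> P (x ^ g).
Proof. by move=> Px Pg; rewrite conjgE; apply: PM (PV Pg) (PM Px Pg). Qed.

Lemma fs_step_letters s t :
  fs_step s t -> {in s, forall x, P x} <-> {in t, forall x, P x}.
Proof.
have step_mid a b m m' : ({in m, forall x, P x} <-> {in m', forall x, P x}) ->
    {in a ++ m ++ b, forall x, P x} <-> {in a ++ m' ++ b, forall x, P x}.
  by move=> mm'; rewrite !in_cat3; split=> -[Pa /mm' Pm Pb].
case=> a b g1 g2; apply: step_mid; rewrite !in_pair.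
- split=> [[Pg1 Pg2] | [Pg2 Pg12]]; first by split=> //; apply: P_conj.
  by split=> //; rewrite -(conjgK g2 g1); apply: P_conj => //; apply: PV.
- split=> [[Pg1 Pg2] | [Pg12 Pg1]]; first by split=> //; apply: PM (PV Pg1); apply: PM.
  have -> : g2 = (g1 * g2 * g1^-1) ^ g1.
    by rewrite conjgE !mulgA mulVg mul1g mulgKV.
  by split=> //; apply: P_conj.
Qed.

Lemma fs_eq_letters s t :
  fs_eq s t -> {in s, forall x, P x} <-> {in t, forall x, P x}.
Proof.
elim=> {s t} [// | s t /fs_step_letters // | s t _ st | s t u _ st _ tu].
- by split=> /st.
- by split=> [/st/tu | /tu/st].
Qed.

End SubgroupPredicate.

Lemma generates_fs_eq s t : fs_eq s t -> generates s -> generates t.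
Proof.
move=> st gen_s P P1 PM PV Pt.
by apply: gen_s => //; exact: (fs_eq_letters PM PV st).2.
Qed.

Lemma generates_subset s t : {subset s <= t} -> generates s -> generates t.
Proof. by move=> st gen_s P P1 PM PV Pt; apply: gen_s => // x /st /Pt. Qed.

End Generation.

Notation word Y := (all (fun x => x \in Y)).

Lemma size_le_count_mem (T : eqType) (Y R : seq T) c :
  word Y R -> {in Y, forall y, count_mem y R <= c} -> size R <= size Y * c.
Proof.
rewrite all_count => /eqP <-; elim: Y => [|y Y IHY] cY /=.
  by rewrite (eq_count (a2 := pred0)) ?count_pred0.
rewrite (eq_count (a2 := predU (pred1 y) (fun x => x \in Y))); last by move=> x; rewrite inE.
apply: leq_trans (leq_addr (count (predI (pred1 y) (fun x => x \in Y)) R) _) _.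
rewrite count_predUI mulSn leq_add ?cY ?mem_head // IHY // => x Yx.
by rewrite cY // inE Yx orbT.
Qed.

Lemma alphaG_map_Cgroup (G H : groupType) (Y : seq G) (f : G -> H) s1 s2 :
    is_Cgroup Y -> (forall y z, y \in Y -> z \in Y -> f (y ^ z) = f y ^ f z) ->
    word Y s1 -> word Y s2 -> alphaG s1 = alphaG s2 ->
  alphaG (map f s1) = alphaG (map f s2).
Proof.
case=> _ _ _ univ f_conj; have [phi [phiM phiY]] := univ H f f_conj.
have phi1 : phi 1 = 1 by apply: (@mulgI _ (phi 1)); rewrite -phiM !mulg1.
have phi_alphaG s : word Y s -> phi (alphaG s) = alphaG (map f s).
  by elim: s => [|x s IHs] //= /andP[Yx Ys]; rewrite phiM phiY // IHs.
by move=> Ys1 Ys2 s12; rewrite -!phi_alphaG // s12.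
Qed.

Fixpoint words_upto (T : Type) (Y : seq T) k : seq (seq T) :=
  if k is k'.+1 then [::] :: [seq y :: w | y <- Y, w <- words_upto Y k'] else [:: [::]].

Lemma mem_words_upto (T : eqType) (Y R : seq T) k :
  word Y R -> size R <= k -> R \in words_upto Y k.
Proof.
elim: k R => [|k IHk] [|y R] //= /andP[Yy YR] R_le.
by rewrite inE; apply/orP; right; apply: allpairs_f => //; apply: IHk.
Qed.

Lemma bounded_witnesses (A : eqType) (B : Type) (L : seq A) (P : A -> B -> Prop)
    (m : B -> nat) :
  exists K, forall a, a \in L -> (exists b, P a b) -> exists2 b, m b <= K & P a b.
Proof.
elim: L => [|a L [K IHL]]; first by exists 0.
have [[b Pab] | noP] := pselect (exists b, P a b).
  exists (maxn K (m b)) => a'; rewrite inE => /orP[/eqP-> _ | a'L /(IHL a' a'L)[b' mb' Pb']].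
    by exists b; rewrite ?leq_maxr.
  by exists b'; rewrite ?(leq_trans mb') ?leq_maxl.
by exists K => a'; rewrite inE => /orP[/eqP-> /noP // | /IHL].
Qed.

Definition Zsucc_bij : bij BinNums.Z := Bij BinInt.Z.pred_succ BinInt.Z.succ_pred.

(* Via the universal property this yields the homomorphism G -> Z counting
   letters of the class of c. *)
Definition class_shift (G : groupType) (c y : G) : bij BinNums.Z :=
  if are_conj c y then Zsucc_bij else 1.

Lemma alphaG_class_shift (G : groupType) (c : G) s :
  alphaG (map (class_shift c) s) BinNums.Z0 = BinInt.Z.of_nat (tau c s).
Proof.
elim: s => [|x s IHs] //=; rewrite IHs /class_shift -/(are_conj c x).
by case: (are_conj c x); rewrite ?add1n ?Znat.Nat2Z.inj_succ.
Qed.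

Lemma tau_alphaG (G : groupType) (Y : seq G) c s1 s2 :
    is_Cgroup Y -> word Y s1 -> word Y s2 ->
  alphaG s1 = alphaG s2 -> tau c s1 = tau c s2.
Proof.
move=> CY Ys1 Ys2 /(alphaG_map_Cgroup (f := class_shift c) CY) s12.
apply: Znat.Nat2Z.inj; rewrite -!alphaG_class_shift s12 // => y z _ _.
rewrite /class_shift are_conjJ; case: (are_conj c y); case: (are_conj c z).
all: by rewrite ?conjg1 ?conj1g // conjgE mulKg.
Qed.

Section CentralExponent.
Variables (G : groupType) (Y : seq G).
Hypothesis conjY : forall y g, y \in Y -> y ^ g \in Y.

Definition conj_sub g (z : seq_sub Y) : seq_sub Y := SeqSub (conjY g (ssvalP z)).

Lemma conj_sub_inj g : injective (conj_sub g).
Proof. by move=> z1 z2 /(congr1 val) /conjg_inj /val_inj. Qed.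

Definition conj_perm g : {perm seq_sub Y} := perm (@conj_sub_inj g).

Lemma conj_permM g h : conj_perm (g * h) = conj_perm g * conj_perm h.
Proof. by apply/permP => z; apply/val_inj; rewrite permM !permE /= conjgM. Qed.

Lemma conj_permX g k : conj_perm (g ^+ k) = conj_perm g ^+ k.
Proof.
elim: k => [|k IHk]; last by rewrite !expgS conj_permM IHk.
by apply/permP => z; apply/val_inj; rewrite perm1 permE /= conjg1.
Qed.

Definition central_exponent := #|[set: {perm seq_sub Y}]|.

Lemma central_exponent_gt0 : 0 < central_exponent.
Proof. exact: cardG_gt0. Qed.

Lemma commute_central_exponent g z : z \in Y -> commute (g ^+ central_exponent) z.
Proof.
move=> Yz; apply/commute_sym/commgP/conjg_fixP.
have := congr1 (fun p : {perm seq_sub Y} => val (p (SeqSub Yz)))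
  (conj_permX g central_exponent).
by rewrite expg_cardG ?inE // perm1 permE.
Qed.

End CentralExponent.

Section Blocks.
Variables (G : groupType) (Y : seq G).
Hypothesis conjY : forall y g, y \in Y -> y ^ g \in Y.
Variable n : nat.
Hypothesis n_gt0 : 0 < n.
Hypothesis central_power : forall y z, y \in Y -> z \in Y -> commute (y ^+ n) z.
Implicit Types (a s u v zs : seq G) (g h x y z : G).

Lemma all_conjw h s : word Y s -> word Y (conjw h s).
Proof. by move=> /allP Ys; apply/allP => _ /mapP[x /Ys Yx ->]; apply: conjY. Qed.

Definition same_classes a b := forall y, y \in Y -> tau y a = tau y b.

Definition block z := nseq n z.
Definition blocks zs := flatten [seq block z | z <- zs].

Lemma blocks_cons z zs : blocks (z :: zs) = block z ++ blocks zs. Proof. by []. Qed.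
Lemma blocks1 z : blocks [:: z] = block z. Proof. exact: cats0. Qed.
Lemma blocks_cat zs zs' : blocks (zs ++ zs') = blocks zs ++ blocks zs'.
Proof. by rewrite /blocks map_cat flatten_cat. Qed.

Lemma all_blocks zs : word Y zs -> word Y (blocks zs).
Proof.
elim: zs => [|z zs IHzs] //= /andP[Yz Yzs].
by rewrite blocks_cons all_cat all_nseq Yz orbT IHzs.
Qed.

Lemma tau_blocks y zs : tau y (blocks zs) = (n * tau y zs)%N.
Proof.
elim: zs => [|z zs IHzs]; first by rewrite muln0.
by rewrite blocks_cons tau_cat tau_nseq IHzs tau_cons mulnDr.
Qed.

Lemma fs_eq_blocks_swap zs u : word Y zs -> word Y u ->
  fs_eq (blocks zs ++ u) (u ++ blocks zs).
Proof.
move=> Yzs /allP Yu; apply: fs_eq_swap => x /Yu Yx {u Yu}.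
elim: zs Yzs => [_ | z zs IHzs /andP[Yz Yzs]]; first exact/commute_sym/commute1.
rewrite blocks_cons alphaG_cat alphaG_nseq.
by apply/commute_sym/commuteM; apply/commute_sym; [apply: central_power | apply: IHzs].
Qed.

Lemma fs_eq_block_conj_alphaG z a : z \in Y -> word Y a ->
  fs_eq (block z ++ a) (block (z ^ alphaG a) ++ a).
Proof.
move=> Yz Ya; apply: (fs_trans (t := a ++ block (z ^ alphaG a))).
  by have := fs_eq_shiftr (block z) a; rewrite /conjw map_nseq.
rewrite -!blocks1; apply: fs_sym; apply: fs_eq_blocks_swap => //=.
by rewrite conjY.
Qed.

Lemma fs_eq_block_conj z v h : z \in Y -> word Y v -> generates v ->
  fs_eq (block z ++ v) (block (z ^ h) ++ v).
Proof.
move=> Yz Yv gen_v; move: h z Yz.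
apply: (gen_v (fun h => forall z, z \in Y -> fs_eq (block z ++ v) (block (z ^ h) ++ v)))
  => [z _ | g h IHg IHh z Yz | g IHg z Yz | x vx z Yz].
- by rewrite conjg1; apply: fs_refl.
- by rewrite conjgM; apply: fs_trans (IHg z Yz) (IHh _ (conjY _ Yz)).
- by have := IHg _ (conjY g^-1 Yz); rewrite conjgKV; apply: fs_sym.
(* For a letter x of v = a ++ x :: b, move the block across a, conjugate it by x,
   and move it back. *)
case/splitPr: vx Yv => a b; rewrite all_cat /= => /and3P[Ya Yx Yb].
have swap_a z' : z' \in Y ->
    fs_eq (block z' ++ a ++ x :: b) (a ++ (block z' ++ [:: x]) ++ b).
  move=> Yz'; rewrite -!catA cat1s !catA; apply: fs_eq_catr.
  by rewrite -blocks1; apply: fs_eq_blocks_swap => //=; rewrite Yz'.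
apply: fs_trans (swap_a _ Yz) _; apply: fs_trans (fs_sym (swap_a _ (conjY x Yz))).
apply: fs_eq_catl; apply: fs_eq_catr.
by have := fs_eq_block_conj_alphaG (a := [:: x]) Yz; rewrite /= Yx mulg1; apply.
Qed.

Lemma fs_eq_blocks_classes zs zs' v :
  word Y zs -> word Y zs' -> same_classes zs zs' -> word Y v -> generates v ->
  fs_eq (blocks zs ++ v) (blocks zs' ++ v).
Proof.
elim: zs zs' => [|z zs IHzs] zs' Yzs Yzs' zs_zs' Yv gen_v.
  case: zs' Yzs' zs_zs' => [|z' zs'] /=; first by move=> *; apply: fs_refl.
  by move=> /andP[Yz' _] /(_ z' Yz'); rewrite tau_cons are_conj_refl.
case/andP: Yzs => Yz Yzs.
have [z' z'_in zz'] : exists2 z', z' \in zs' & are_conj z z'.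
  by apply: has_are_conj; rewrite -zs_zs' // tau_cons are_conj_refl.
case/splitPr: z'_in Yzs' zs_zs' => a b; rewrite all_cat /= => /and3P[Ya Yz' Yb] zs_zs'.
have Yab : word Y (a ++ b) by rewrite all_cat Ya.
rewrite blocks_cons blocks_cat blocks_cons -!catA.
apply: (fs_trans (t := block z ++ blocks (a ++ b) ++ v)).
  apply: fs_eq_catl; apply: IHzs => // y Yy; move: (zs_zs' y Yy).
  by rewrite tau_cons !tau_cat tau_cons (are_conj_eqr y zz'); lia.
apply: (fs_trans (t := block z' ++ blocks (a ++ b) ++ v)).
  case/are_conjP: zz' => g ->; apply: fs_eq_block_conj => //.
    by rewrite all_cat all_blocks.
  by apply: generates_subset gen_v => x x_in; rewrite mem_cat x_in orbT.
rewrite blocks_cat -!catA !catA; do 2 apply: fs_eq_catr; rewrite -blocks1.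
by apply: fs_eq_blocks_swap; rewrite /= ?Yz' ?all_blocks.
Qed.

Lemma fs_eq_gather k g s : k <= count_mem g s -> word Y s ->
  exists s', [/\ fs_eq s (nseq k g ++ s'), word Y s',
                 count_mem g s' + k = count_mem g s & size s' + k = size s].
Proof.
move=> k_le Ys; elim: k k_le => [_ | k IHk k_lt].
  by exists s; rewrite !addn0; split=> //; apply: fs_refl.
have [s' [ss' Ys' cnt sz]] := IHk (ltnW k_lt).
have s'g : g \in s' by rewrite -has_pred1 has_count; lia.
case/splitPr: s'g ss' Ys' cnt sz => a b ss'; rewrite all_cat /= => /and3P[Ya _ Yb] cnt sz.
exists (conjw g a ++ b); split.
- apply: fs_trans ss' _; rewrite -[g :: _]/(nseq k.+1 g ++ _) -addn1 nseqD -catA.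
  by apply: fs_eq_catl; apply: fs_eq_pull.
- by rewrite all_cat all_conjw.
- by move: cnt; rewrite !count_cat count_mem_conjw /= eqxx; lia.
- by move: sz; rewrite !size_cat size_map /=; lia.
Qed.

Lemma fs_eq_blocks_reduced s : word Y s -> generates s ->
  exists zs R, [/\ word Y zs, word Y R, generates R,
                   forall g, count_mem g R <= n & fs_eq s (blocks zs ++ R)].
Proof.
elim: {s}(size s).+1 {-2}s (ltnSn (size s)) => // k IHk s s_le Ys gen_s.
have [/hasP[g sg g_many] | few] := boolP (has (fun g => n < count_mem g s) s); last first.
  exists [::], s; split=> //; last exact: fs_refl.
  move=> g; have [/(hasPn few)|/count_memPn -> //] := boolP (g \in s).
  by rewrite ltnNge negbK.
have [s' [ss' Ys' cnt sz]] := fs_eq_gather (ltnW g_many) Ys.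
have gen_s' : generates s'.
  apply: generates_subset (generates_fs_eq ss' gen_s) => x.
  rewrite mem_cat => /orP[/nseqP[-> _] |//]; rewrite -has_pred1 has_count; lia.
have [zs [R [Yzs YR gen_R R_few s'_zsR]]] := IHk s' ltac:(lia) Ys' gen_s'.
exists (g :: zs), R; split=> //=; first by rewrite (allP Ys).
by apply: fs_trans ss' _; rewrite blocks_cons -catA; apply: fs_eq_catl.
Qed.

Lemma split_classes zs (c : G -> nat) : word Y zs ->
  (forall y y', y \in Y -> y' \in Y -> are_conj y y' -> c y = c y') ->
  (forall y, y \in Y -> c y <= tau y zs) ->
  exists d e, perm_eq zs (d ++ e) /\ forall y, y \in Y -> tau y d = c y.
Proof.
elim: zs c => [|z zs IHzs] c Yzs c_conj c_le.
  by exists [::], [::]; split=> // y /c_le /=; rewrite leqn0 => /eqP ->.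
case/andP: Yzs => Yz Yzs.
have [cz0 | cz_gt0] := posnP (c z).
  have [|d [e [zs_de tau_d]]] := IHzs c Yzs c_conj.
    move=> y Yy; have := c_le y Yy; rewrite tau_cons.
    have [yz|_] := boolP (are_conj y z); last by rewrite add0n.
    by rewrite (c_conj y z) // cz0.
  exists d, (z :: e); split=> //.
  by rewrite perm_sym (perm_catCA d [:: z] e) /= perm_cons perm_sym.
pose c' y := c y - are_conj y z.
have [||d [e [zs_de tau_d]]] := IHzs c' Yzs.
- by move=> y y' Yy Yy' yy'; rewrite /c' (c_conj y y') // (are_conj_eql z yy').
- by move=> y /c_le; rewrite tau_cons /c'; lia.
exists (z :: d), e; split; first by rewrite /= perm_cons.
move=> y Yy; rewrite tau_cons tau_d // /c'.
have [yz|] := boolP (are_conj y z); last by rewrite add0n subn0.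
by move: cz_gt0; rewrite -(c_conj y z) //; lia.
Qed.

Definition reduced_bound := (n * size Y)%N.

(* Blocks are moved from zs into the reduced part until every class count of R
   equals reduced_bound + (tau y s mod n), which exceeds the length of a reduced
   word and has the right residue mod n. *)
Lemma fs_eq_normal_form s : word Y s -> generates s ->
    (forall y, y \in Y -> reduced_bound + n <= tau y s) ->
  exists zs R, [/\ word Y zs, word Y R, generates R,
                   forall y, y \in Y -> tau y R = reduced_bound + tau y s %% n
                 & fs_eq s (blocks zs ++ R)].
Proof.
move=> Ys gen_s s_large.
have [zs [R [Yzs YR gen_R R_few s_zsR]]] := fs_eq_blocks_reduced Ys gen_s.
have tau_s y : tau y s = (n * tau y zs + tau y R)%N.
  by rewrite (tau_fs_eq y s_zsR) tau_cat tau_blocks.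
have tau_R y : tau y R <= reduced_bound.
  apply: leq_trans (count_size _ _) _; rewrite /reduced_bound mulnC.
  exact: size_le_count_mem.
pose t y := reduced_bound + tau y s %% n.
have n_dvd y : n %| t y - tau y R.
  rewrite -eqn_mod_dvd; last exact: leq_trans (tau_R y) (leq_addr _ _).
  by rewrite /t /reduced_bound mulnC modnMDl modn_mod tau_s mulnC modnMDl.
have [|y Yy|d [e [zs_de tau_d]]] := split_classes (c := fun y => (t y - tau y R) %/ n) Yzs.
- by move=> y y' _ _ yy'; rewrite /t !(tau_are_conj _ yy').
- rewrite leq_divLR // mulnC; have := s_large y Yy; have := ltn_pmod (tau y s) n_gt0.
  by rewrite tau_s /t; lia.
have zs_ed : perm_eq zs (e ++ d) by rewrite perm_sym perm_catC perm_sym.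
exists e, (blocks d ++ R); split.
- by move: Yzs; rewrite (perm_all _ zs_ed) all_cat => /andP[].
- rewrite all_cat YR andbT all_blocks //.
  by move: Yzs; rewrite (perm_all _ zs_de) all_cat => /andP[].
- by apply: generates_subset gen_R => x xR; rewrite mem_cat xR orbT.
- move=> y Yy; rewrite tau_cat tau_blocks tau_d // mulnC divnK // subnK //.
  exact: leq_trans (tau_R y) (leq_addr _ _).
apply: fs_trans s_zsR _; rewrite catA -blocks_cat.
apply: fs_eq_blocks_classes => //; first by rewrite -(perm_all _ zs_ed).
by move=> y _; apply: tau_perm.
Qed.

Definition stably_eq u v :=
  exists zs zs', [/\ word Y zs, word Y zs' & fs_eq (u ++ blocks zs) (v ++ blocks zs')].

Lemma stably_eq_sym u v : stably_eq u v -> stably_eq v u.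
Proof. by case=> zs [zs' [Yzs Yzs' uv]]; exists zs', zs; split=> //; apply: fs_sym. Qed.

Lemma stably_eq_trans v u w : stably_eq u v -> stably_eq v w -> stably_eq u w.
Proof.
case=> [z1 [z1' [Yz1 Yz1' uv]]] [z2 [z2' [Yz2 Yz2' vw]]].
exists (z1 ++ z2), (z2' ++ z1'); split; rewrite ?all_cat ?Yz1 ?Yz2 ?Yz1' ?Yz2' //.
rewrite !blocks_cat catA; apply: fs_trans (fs_eq_catr _ uv) _.
apply: (fs_trans (t := (v ++ blocks z2) ++ blocks z1')).
  by rewrite -!catA; apply: fs_eq_catl; apply: fs_eq_blocks_swap; rewrite ?all_blocks.
by rewrite catA; apply: fs_eq_catr.
Qed.

Lemma stably_eq_catr w u v : word Y w -> stably_eq u v -> stably_eq (u ++ w) (v ++ w).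
Proof.
move=> Yw [zs [zs' [Yzs Yzs' uv]]]; exists zs, zs'; split=> //.
rewrite -!catA; apply: fs_trans (fs_eq_catl _ (fs_sym (fs_eq_blocks_swap _ _))) _ => //.
by rewrite !catA; apply: fs_trans (fs_eq_catr _ uv) _; rewrite -!catA;
  apply: fs_eq_catl; apply: fs_eq_blocks_swap.
Qed.

Lemma fs_eq_stably_eq u v : fs_eq u v -> stably_eq u v.
Proof. by move=> uv; exists [::], [::]; rewrite !cats0. Qed.

Definition saturated (P : seq G -> Prop) := forall u v, stably_eq u v -> P u -> P v.
Definition satpred := {P : seq G -> Prop | saturated P}.

Lemma satpredE (P : satpred) u v : stably_eq u v -> sval P u = sval P v.
Proof.
by case: P => P satP uv; apply: propext; split; apply: satP => //; apply: stably_eq_sym.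
Qed.

Lemma satpred_ext (P Q : satpred) : sval P =1 sval Q -> P = Q.
Proof. by case: P Q => P satP [Q satQ] /= /funext PQ; apply: eq_exist. Qed.

Lemma saturated_catr w P : word Y w -> saturated P -> saturated (fun u => P (u ++ w)).
Proof. by move=> Yw satP u v uv; apply: satP; apply: stably_eq_catr. Qed.

Definition satpred_catr w (Yw : word Y w) (P : satpred) : satpred :=
  exist _ _ (saturated_catr Yw (svalP P)).

Lemma stably_eq_block u z : z \in Y -> stably_eq (u ++ block z) u.
Proof.
move=> Yz; exists [::], [:: z]; split=> //=; first by rewrite Yz.
by rewrite blocks1 cats0; apply: fs_refl.
Qed.

(* Appending [z] acts bijectively on saturated predicates, with inverse appending
   z^(n-1): appending a full block does not change the stable class. *)
Section LetterAction.
Variables (z : G) (Yz : z \in Y).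

Let Yz1 : word Y [:: z]. Proof. by rewrite /= Yz. Qed.
Let Yzn : word Y (nseq n.-1 z). Proof. by rewrite all_nseq Yz orbT. Qed.

Lemma block_consn : block z = z :: nseq n.-1 z.
Proof. by rewrite /block -[in LHS](prednK n_gt0). Qed.

Lemma block_rconsn : block z = nseq n.-1 z ++ [:: z].
Proof. by rewrite block_consn -cat1s -(nseqD 1) addnC nseqD. Qed.

Lemma satpred_catrK : cancel (satpred_catr Yz1) (satpred_catr Yzn).
Proof.
move=> [P satP]; apply: satpred_ext => u /=.
by rewrite -catA -block_rconsn; apply: (satpredE (exist _ P satP)); apply: stably_eq_block.
Qed.

Lemma satpred_catrKV : cancel (satpred_catr Yzn) (satpred_catr Yz1).
Proof.
move=> [P satP]; apply: satpred_ext => u /=.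
by rewrite -catA /= -block_consn; apply: (satpredE (exist _ P satP)); apply: stably_eq_block.
Qed.

Definition letter_bij : bij satpred := Bij satpred_catrK satpred_catrKV.

End LetterAction.

(* Letters outside Y never occur in words; they act trivially. *)
Definition letter_action z : bij satpred :=
  if pselect (z \in Y) is left Yz then letter_bij Yz else 1.

Lemma letter_actionE z (Yz : z \in Y) P u :
  sval (letter_action z P) u = sval P (u ++ [:: z]).
Proof. by rewrite /letter_action; case: pselect. Qed.

Lemma letter_action_invE z (Yz : z \in Y) P u :
  sval ((letter_action z)^-1 P) u = sval P (u ++ nseq n.-1 z).
Proof. by rewrite /letter_action; case: pselect. Qed.

Lemma alphaG_letter_action s P w : word Y s ->
  sval (alphaG (map letter_action s) P) w = sval P (w ++ s).
Proof.
elim: s P w => [|x s IHs] P w /=; first by rewrite cats0.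
by case/andP=> Yx Ys; rewrite letter_actionE // IHs // -catA.
Qed.

Lemma letter_action_conj y z : y \in Y -> z \in Y ->
  letter_action (y ^ z) = letter_action y ^ letter_action z.
Proof.
move=> Yy Yz; apply: bij_fun_inj; apply: funext => P; apply: satpred_ext => u.
rewrite [_ ^ letter_action z]conjgE !bijME letter_action_invE // !letter_actionE ?conjY //.
apply: satpredE; apply: stably_eq_trans (stably_eq_sym (stably_eq_block _ Yz)) _.
apply: fs_eq_stably_eq; rewrite -!catA; apply: fs_eq_catl.
rewrite -blocks1; apply: fs_trans (fs_sym (fs_eq_blocks_swap _ _)) _; rewrite /= ?Yz ?conjY //.
rewrite blocks1 block_rconsn -catA; apply: fs_eq_catl; apply: fs_sym.
exact: (fs_of_step (fs_step1 [::] [::] y z)).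
Qed.

Lemma stably_eq_alphaG s1 s2 : is_Cgroup Y -> word Y s1 -> word Y s2 ->
  alphaG s1 = alphaG s2 -> stably_eq s1 s2.
Proof.
move=> CY Ys1 Ys2 /(alphaG_map_Cgroup CY letter_action_conj Ys1 Ys2).
have sat_s1 : saturated (stably_eq s1) by move=> u v /[swap]; apply: stably_eq_trans.
move/(congr1 (fun p : bij satpred => sval (p (exist _ _ sat_s1)) [::])).
rewrite !alphaG_letter_action //= => <-.
by apply: fs_eq_stably_eq; apply: fs_refl.
Qed.

Definition equalizes zs R1 R2 := word Y zs /\ fs_eq (blocks zs ++ R1) (blocks zs ++ R2).

Lemma equalizes_grow zs zs' R1 R2 : word Y zs ->
    (forall y, y \in Y -> tau y zs' <= tau y zs) ->
    word Y R1 -> word Y R2 -> generates R1 -> generates R2 ->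
  equalizes zs' R1 R2 -> equalizes zs R1 R2.
Proof.
move=> Yzs zs'_le YR1 YR2 gen_R1 gen_R2 [Yzs' eqR].
have [|y Yy|d [e [zs_de tau_d]]] := split_classes (c := fun y => tau y zs') Yzs.
- by move=> y y' _ _ yy'; apply: tau_are_conj.
- exact: zs'_le.
have Ye : word Y e by move: Yzs; rewrite (perm_all _ zs_de) all_cat => /andP[].
have zs_ezs' : same_classes zs (e ++ zs').
  by move=> y Yy; rewrite (tau_perm _ zs_de) !tau_cat tau_d // addnC.
have Yezs' : word Y (e ++ zs') by rewrite all_cat Ye.
split=> //; apply: fs_trans (fs_eq_blocks_classes Yzs Yezs' zs_ezs' YR1 gen_R1) _.
apply: fs_trans (fs_sym (fs_eq_blocks_classes Yzs Yezs' zs_ezs' YR2 gen_R2)).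
by rewrite blocks_cat -!catA; apply: fs_eq_catl.
Qed.

Lemma tau_blocks_cat y zs R : tau y (blocks zs ++ R) = (n * tau y zs + tau y R)%N.
Proof. by rewrite tau_cat tau_blocks. Qed.

Lemma same_classes_blocks zs1 zs2 R1 R2 :
    same_classes (blocks zs1 ++ R1) (blocks zs2 ++ R2) -> same_classes R1 R2 ->
  same_classes zs1 zs2.
Proof.
move=> e12 R12 y Yy; move: (e12 y Yy); rewrite !tau_blocks_cat R12 // => /addIn.
by move/eqP; rewrite eqn_pmul2l // => /eqP.
Qed.

Lemma stably_eq_equalizer s1 s2 zs1 zs2 R1 R2 :
    word Y s1 -> word Y s2 -> same_classes s1 s2 -> stably_eq s1 s2 ->
    word Y zs1 -> word Y zs2 -> same_classes zs1 zs2 -> word Y R2 -> generates R2 ->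
    fs_eq s1 (blocks zs1 ++ R1) -> fs_eq s2 (blocks zs2 ++ R2) ->
  exists zs, equalizes zs R1 R2.
Proof.
move=> Ys1 Ys2 s12 [zs [zs' [Yzs Yzs' st]]] Yzs1 Yzs2 zs12 YR2 gen_R2 nf1 nf2.
have zs_zs' : same_classes zs zs'.
  move=> y Yy; move: (tau_fs_eq y st); rewrite !tau_cat !tau_blocks s12 // => /addnI.
  by move/eqP; rewrite eqn_pmul2l // => /eqP.
exists (zs ++ zs1); split; first by rewrite all_cat Yzs.
rewrite blocks_cat -catA; apply: fs_trans (fs_eq_catl _ (fs_sym nf1)) _.
apply: fs_trans (fs_eq_blocks_swap Yzs Ys1) _; apply: fs_trans st _.
apply: fs_trans (fs_sym (fs_eq_blocks_swap Yzs' Ys2)) _.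
apply: fs_trans (fs_eq_catl _ nf2) _; rewrite !catA -!blocks_cat.
apply: fs_eq_blocks_classes; rewrite ?all_cat ?Yzs ?Yzs' //.
by move=> y Yy; rewrite !tau_cat zs_zs' // zs12.
Qed.

Definition normal_parts := words_upto Y (size Y * (reduced_bound + n)).

Lemma mem_normal_parts R : word Y R ->
  (forall y, y \in Y -> tau y R <= reduced_bound + n) -> R \in normal_parts.
Proof.
move=> YR R_le; apply: mem_words_upto => //; apply: size_le_count_mem => // y Yy.
by apply: leq_trans (R_le y Yy); apply: sub_count => x /eqP ->; apply: are_conj_refl.
Qed.

Definition equalizer_bounded K := forall R1 R2, R1 \in normal_parts -> R2 \in normal_parts ->
  (exists zs, equalizes zs R1 R2) -> exists2 zs, size zs <= K & equalizes zs R1 R2.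

Lemma equalizer_bound : exists K, equalizer_bounded K.
Proof.
have [K bound] := bounded_witnesses (allpairs pair normal_parts normal_parts)
  (fun p zs => equalizes zs p.1 p.2) size.
by exists K => R1 R2 R1_in R2_in; apply: (bound (R1, R2)); apply: allpairs_f.
Qed.

Lemma fs_eq_of_stably_eq K s1 s2 :
    equalizer_bounded K ->
    word Y s1 -> word Y s2 -> generates s1 -> generates s2 ->
    (forall y, y \in Y -> reduced_bound + n + n * K <= tau y s1) ->
    same_classes s1 s2 -> stably_eq s1 s2 ->
  fs_eq s1 s2.
Proof.
move=> bound Ys1 Ys2 gen_s1 gen_s2 s1_large s12 st.
have large1 y : y \in Y -> reduced_bound + n <= tau y s1.
  by move=> Yy; apply: leq_trans (s1_large y Yy); apply: leq_addr.
have [zs1 [R1 [Yzs1 YR1 gen_R1 tau_R1 nf1]]] := fs_eq_normal_form Ys1 gen_s1 large1.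
have large2 y : y \in Y -> reduced_bound + n <= tau y s2.
  by move=> Yy; rewrite -s12 ?large1.
have [zs2 [R2 [Yzs2 YR2 gen_R2 tau_R2 nf2]]] := fs_eq_normal_form Ys2 gen_s2 large2.
have R12 : same_classes R1 R2 by move=> y Yy; rewrite tau_R1 // tau_R2 // s12.
have zs12 : same_classes zs1 zs2.
  apply: same_classes_blocks R12 => y Yy.
  by rewrite -(tau_fs_eq y nf1) -(tau_fs_eq y nf2) s12.
have R_in R : word Y R -> same_classes R R1 -> R \in normal_parts.
  move=> YR RR1; apply: mem_normal_parts => // y Yy; rewrite RR1 // tau_R1 // leq_add2l.
  exact: ltnW (ltn_pmod _ n_gt0).
have [zsp zsp_le [Yzsp eq_p]] := bound R1 R2 (R_in _ YR1 (fun _ _ => erefl))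
  (R_in _ YR2 (fun y Yy => esym (R12 y Yy)))
  (stably_eq_equalizer Ys1 Ys2 s12 st Yzs1 Yzs2 zs12 YR2 gen_R2 nf1 nf2).
have [_ eq1] : equalizes zs1 R1 R2.
  apply: equalizes_grow (conj Yzsp eq_p) => // y Yy.
  apply: leq_trans (count_size _ _) (leq_trans zsp_le _).
  rewrite -(leq_pmul2l n_gt0); have := s1_large y Yy; have := ltn_pmod (tau y s1) n_gt0.
  by have := tau_fs_eq y nf1; rewrite tau_blocks_cat tau_R1 //; lia.
apply: fs_trans nf1 (fs_trans eq1 _).
apply: fs_trans (fs_eq_blocks_classes Yzs1 Yzs2 zs12 YR2 gen_R2) (fs_sym nf2).
Qed.

End Blocks.

Theorem theorem4p1 (G : groupType) (Y : seq G) :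
  is_Cgroup Y ->
  exists T : nat,
    forall s1 s2 : seq G,
      is_word Y s1 -> is_word Y s2 ->
      generates s1 -> generates s2 ->
      (forall y, y \in Y -> (T <= tau y s1)%N) ->
      alphaG s1 = alphaG s2 ->
      fs_eq s1 s2.
Proof.
move=> CY; have [_ conjY _ _] := CY.
pose n := central_exponent Y.
have n_gt0 : 0 < n := central_exponent_gt0 Y.
have central_power y z : y \in Y -> z \in Y -> commute (y ^+ n) z.
  by move=> _ Yz; apply: commute_central_exponent.
have [K bound] := equalizer_bound Y n.
exists (reduced_bound Y n + n + n * K)%N => s1 s2 Ys1 Ys2 gen_s1 gen_s2 s1_large s12.
apply: (fs_eq_of_stably_eq conjY n_gt0 central_power bound) => //.
  by move=> y _; apply: tau_alphaG CY Ys1 Ys2 s12.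
by apply: (stably_eq_alphaG conjY n_gt0 central_power CY).
Qed.
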